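(* Let $\mathcal{G}$ be a $k$-uniform hypergraph. Then \[ i(\mathcal{G})\geq\frac{\alpha(\mathcal{G})+\beta(\mathcal{G})}{k}. \]
   Context: A $k$-uniform hypergraph $\mathcal{G}$ has vertex set $V(\mathcal{G})=[n]$ and edge set $E(\mathcal{G})$ of $k$-element subsets of $V(\mathcal{G})$. For $\mathbf{x}\in\mathbb{R}^n$, $\mathcal{L}_\mathcal{G}\mathbf{x}^k=\sum_{\{i_1,\ldots,i_k\}\in E(\mathcal{G})}\left(x_{i_1}^k+\cdots+x_{i_k}^k-k\,x_{i_1}\cdots x_{i_k}\right)$. The inverse Perron value of vertex $j$ is $\alpha_j(\mathcal{G})=\min\{\mathcal{L}_\mathcal{G}\mathbf{x}^k : \mathbf{x}\in\mathbb{R}^n_+,\ \sum_{i=1}^n x_i^k=1,\ x_j=0\}$. Let $\alpha(\mathcal{G})=\min_{j\in V(\mathcal{G})}\alpha_j(\mathcal{G})$ (the analytic connectivity) and $\beta(\mathcal{G})=\max_{j\in V(\mathcal{G})}\alpha_j(\mathcal{G})$. For $S\subseteq V(\mathcal{G})$ with $\overline{S}=V(\mathcal{G})\setminus S$, $E(S,\overline{S})$ is the set of edges containing vertices of both $S$ and $\overline{S}$. The isoperimetric number is $i(\mathcal{G})=\min\{|E(S,\overline{S})|/|S| : S\subseteq V(\mathcal{G}),\ 0<|S|\le |V(\mathcal{G})|/2\}$. *)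

From HB Require Import structures.
From mathcomp Require Import all_boot all_order all_algebra.
From mathcomp Require Import all_classical all_reals.
Set Implicit Arguments. Unset Strict Implicit. Unset Printing Implicit Defensive.
Import Order.TTheory GRing.Theory Num.Theory.
Local Open Scope ring_scope.
Local Open Scope classical_set_scope.

Definition uniform_hypergraph (n k : nat) (E : {set {set 'I_n}}) : Prop :=
  forall e, e \in E -> #|e| = k.

Definition lapl_form (R : realType) (n k : nat) (E : {set {set 'I_n}})
  (x : 'I_n -> R) : R :=
  \sum_(e in E) ((\sum_(i in e) x i ^+ k) - k%:R * \prod_(i in e) x i).

Definition feasible (R : realType) (n k : nat) (j : 'I_n) (x : 'I_n -> R) : Prop :=
  (forall i, 0 <= x i) /\ \sum_i x i ^+ k = 1 /\ x j = 0.

(* inverse Perron value alpha_j(G): the minimum (= infimum, attained by compactness) *)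
Definition alpha_j (R : realType) (n k : nat) (E : {set {set 'I_n}}) (j : 'I_n) : R :=
  inf [set @lapl_form R n k E x | x in [set x : 'I_n -> R | @feasible R n k j x]].

Definition alpha_conn (R : realType) (n k : nat) (E : {set {set 'I_n}}) : R :=
  inf (range (@alpha_j R n k E)).

Definition beta_conn (R : realType) (n k : nat) (E : {set {set 'I_n}}) : R :=
  sup (range (@alpha_j R n k E)).

Definition cut_edges (n : nat) (E : {set {set 'I_n}}) (S : {set 'I_n}) : {set {set 'I_n}} :=
  [set e in E | (e :&: S != finset.set0) && (e :&: ~: S != finset.set0)].

Definition isoperimetric (R : realType) (n : nat) (E : {set {set 'I_n}}) : R :=
  inf [set (#|cut_edges E S|%:R / #|S|%:R : R) |
        S in [set S : {set 'I_n} | (0 < #|S|)%N /\ (2 * #|S| <= n)%N]].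

From HB Require Import structures.
From mathcomp Require Import all_boot all_order all_algebra.
From mathcomp Require Import all_classical all_reals.
From mathcomp Require Import zify.
Import Order.TTheory GRing.Theory Num.Theory.
Local Open Scope ring_scope.

(* Fix S with 0 < |S| <= n/2.  For a vertex set T avoiding j, the vector equal
   to |T|^(-1/k) on T and to 0 elsewhere is feasible for alpha_j; an edge inside
   T contributes k c^k - k c^k = 0 to L x^k and a cut edge e contributes
   |e :&: T| / |T|.  Since |~: S| >= |S|, this gives alpha_j <= a / |S| for j
   outside S and alpha_j <= b / |S| for j in S, where a + b = k |E(S, ~: S)|
   counts the incidences of cut edges with the two sides.  Hence
   alpha <= min(a, b) / |S| and beta <= max(a, b) / |S|. *)

Lemma exists_nonneg_rootn (R : rcfType) (c : R) (k : nat) :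
  0 <= c -> (0 < k)%N -> exists2 r : R, 0 <= r & r ^+ k = c.
Proof.
move=> c_ge0 k_gt0.
have [||r /andP[r_ge0 _] root_r] := @poly_ivt R ('X^k - c%:P) 0 (1 + c).
- by rewrite addr_ge0.
- rewrite !hornerE expr0n -(prednK k_gt0) /= sub0r oppr_le0 c_ge0 /= subr_ge0.
  rewrite prednK // (le_trans _ (ler_eXnr k_gt0 _)) ?lerDr ?lerDl //.
by exists r => //; apply/eqP; move: root_r; rewrite /root !hornerE subr_eq0.
Qed.

Section FiniteRange.
Context {R : realType} {T : finType}.

Lemma has_ubound_range_fin (f : T -> R) : has_ubound (range f).
Proof.
exists (\sum_i `|f i|) => _ [j _ <-].
by rewrite (le_trans (ler_norm _)) // (bigD1 j) //= lerDl sumr_ge0.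
Qed.

Lemma has_lbound_range_fin (f : T -> R) : has_lbound (range f).
Proof.
have [M ubM] := has_ubound_range_fin (fun j => - f j).
exists (- M) => _ [j _ <-]; rewrite lerNl.
by apply: ubM; exists j.
Qed.

Lemma inf_range_le_fin (f : T -> R) (j : T) : inf (range f) <= f j.
Proof. by apply: ge_inf; [exact: has_lbound_range_fin | exists j]. Qed.

Lemma sup_range_le_fin (f : T -> R) (M : R) :
  T -> (forall j, f j <= M) -> sup (range f) <= M.
Proof.
by move=> j0 fM; apply: ge_sup; [exists (f j0), j0 | move=> _ [j _ <-]].
Qed.

End FiniteRange.

Section CutBounds.
Variables (R : realType) (n k : nat) (E : {set {set 'I_n}}).
Hypotheses (k_gt0 : (0 < k)%N) (unifE : uniform_hypergraph k E).

Definition cut_incidences (T : {set 'I_n}) : R :=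
  \sum_(e in cut_edges E T) #|e :&: T|%:R.

Lemma cut_incidences_ge0 T : 0 <= cut_incidences T.
Proof. exact: sumr_ge0. Qed.

Lemma cut_edgesC S : cut_edges E (~: S) = cut_edges E S.
Proof.
by apply/setP => e; rewrite !inE finset.setCK [X in _ && X]andbC.
Qed.

Lemma cut_incidencesC S :
  cut_incidences S + cut_incidences (~: S) = k%:R * #|cut_edges E S|%:R.
Proof.
rewrite /cut_incidences cut_edgesC -big_split /= mulr_natr -sumr_const.
apply: eq_bigr => e; rewrite inE => /andP[eE _].
by rewrite -natrD -finset.setDE cardsID unifE.
Qed.

Lemma lapl_form_indicator (T : {set 'I_n}) (c : R) :
  lapl_form k E (fun i => if i \in T then c else 0) = c ^+ k * cut_incidences T.
Proof.
set x := fun i => _; rewrite /lapl_form /cut_incidences mulr_sumr.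
rewrite big_mkcond [RHS]big_mkcond; apply: eq_bigr => e _ /=.
rewrite inE; have [eE /= | //] := boolP (e \in E).
have sum_pow : \sum_(i in e) x i ^+ k = #|e :&: T|%:R * c ^+ k.
  rewrite (eq_bigr (fun i => if i \in T then c ^+ k else 0)); last first.
    by move=> i _; rewrite /x; case: ifP; rewrite ?expr0n ?gtn_eqF.
  rewrite -big_mkcondr sumr_const mulr_natl; congr (_ *+ _).
  by apply: eq_card => i; rewrite !inE.
rewrite sum_pow mulrC.
have [eT | /fintype.subsetPn [i ie iT]] := boolP (e \subset T).
  rewrite -finset.setDE finset.setD_eq0 eT andbF (finset.setIidPl eT) unifE //.
  rewrite (eq_bigr (fun=> c)) ?prodr_const ?unifE ?[k%:R * _]mulrC ?subrr //.
  by move=> i ie; rewrite /x (fintype.subsetP eT).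
have prod0 : \prod_(i in e) x i = 0.
  by rewrite (bigD1 i) //= /x (negbTE iT) mul0r.
have -> : e :&: ~: T != finset.set0.
  by apply/finset.set0Pn; exists i; rewrite !inE ie.
rewrite prod0 mulr0 subr0 andbT; case: eqP => [-> | //].
by rewrite cards0 mulr0.
Qed.

Lemma alpha_j_le_cut_incidences (T : {set 'I_n}) (m : nat) (j : 'I_n) :
  (0 < m)%N -> (m <= #|T|)%N -> j \notin T ->
  @alpha_j R n k E j <= cut_incidences T / m%:R.
Proof.
move=> m_gt0 mT jT.
have T_gt0 : (0 < #|T|)%N := leq_trans m_gt0 mT.
apply: (@le_trans _ _ (cut_incidences T / #|T|%:R)); last first.
  by rewrite ler_wpM2l ?cut_incidences_ge0 // lef_pV2 ?posrE ?ltr0n ?ler_nat.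
rewrite /alpha_j; set A := (X in inf X).
(* Without an infimum, [inf A] is the junk value 0. *)
have [infA | ninfA] := pselect (has_inf A); last first.
  by rewrite inf_out // divr_ge0 ?cut_incidences_ge0.
have [|r r_ge0 rk] := @exists_nonneg_rootn R #|T|%:R^-1 k _ k_gt0.
  by rewrite invr_ge0.
pose x i := if i \in T then r else 0.
have x_feas : feasible k j x.
  split; first by move=> i; rewrite /x; case: ifP.
  split; last by rewrite /x (negbTE jT).
  rewrite (eq_bigr (fun i => if i \in T then #|T|%:R^-1 else 0)); last first.
    by move=> i _; rewrite /x; case: ifP; rewrite ?expr0n ?gtn_eqF.
  by rewrite -big_mkcond sumr_const -[LHS]mulr_natr mulVf ?gt_eqF ?ltr0n.
apply: le_trans (ge_inf infA.2 (ex_intro2 _ _ x x_feas erefl)) _.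
by rewrite lapl_form_indicator rk mulrC.
Qed.

Lemma alpha_add_beta_le_cut (S : {set 'I_n}) :
  (0 < #|S|)%N -> (2 * #|S| <= n)%N ->
  @alpha_conn R n k E + @beta_conn R n k E <=
  k%:R * (#|cut_edges E S|%:R / #|S|%:R).
Proof.
move=> S_gt0 S_half.
have S_le_SC : (#|S| <= #|~: S|)%N by have := cardsC S; rewrite card_ord; lia.
have [j0 j0S] : exists j, j \notin S.
  have /finset.set0Pn[j] : ~: S != finset.set0.
    by rewrite -card_gt0 (leq_trans S_gt0).
  by rewrite inE; exists j.
have [j1 j1S] : exists j, j \in S by apply/finset.set0Pn; rewrite -card_gt0.
set a := cut_incidences S / #|S|%:R; set b := cut_incidences (~: S) / #|S|%:R.
set alpha := @alpha_j R n k E.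
have alpha_out j : j \notin S -> alpha j <= a.
  exact: alpha_j_le_cut_incidences.
have alpha_in j : j \in S -> alpha j <= b.
  by move=> jS; apply: alpha_j_le_cut_incidences; rewrite ?inE ?jS.
have alpha_le : @alpha_conn R n k E <= Num.min a b.
  rewrite le_min (le_trans (inf_range_le_fin alpha j0)) ?alpha_out //=.
  by rewrite (le_trans (inf_range_le_fin alpha j1)) ?alpha_in.
have beta_le : @beta_conn R n k E <= Num.max a b.
  apply: (sup_range_le_fin _ _ j0) => j; rewrite le_max.
  by have [/alpha_in -> | /alpha_out ->] := boolP (j \in S); rewrite ?orbT.
apply: le_trans (lerD alpha_le beta_le) _.
by rewrite addr_min_max -mulrDl cut_incidencesC mulrA.
Qed.

End CutBounds.

Theorem theorem3p3 (R : realType) (n k : nat) (E : {set {set 'I_n}}) :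
  (2 <= n)%N -> (2 <= k)%N -> uniform_hypergraph k E ->
  @isoperimetric R n E >= (@alpha_conn R n k E + @beta_conn R n k E) / k%:R.
Proof.
move=> n_ge2 k_ge2 unifE.
have k_gt0 : (0 < k)%N by apply: leq_trans k_ge2.
have v0 : 'I_n by exists 0%N; apply: leq_trans n_ge2.
apply: lb_le_inf.
  exists (#|cut_edges E [set v0]|%:R / #|[set v0]|%:R), [set v0] => //.
  by rewrite /= cards1.
move=> _ [S [S_gt0 S_half] <-].
by rewrite ler_pdivrMr ?ltr0n // mulrC alpha_add_beta_le_cut.
Qed.
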